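(* Let $n\ge2r\ge4$. If $k>n-r$, then there is no graph $H$ with $\mathsf{TJ}_k(H)\cong J(n,r)$; that is, $k\notin\mathcal{K}^{\mathsf{TJ}}(J(n,r))$.
   Context: All graphs are finite, simple, undirected. A $k$-clique of a graph $H$ is a set of $k$ pairwise adjacent vertices. For a graph $H$ and integer $k\ge1$, the Token Jumping graph $\mathsf{TJ}_k(H)$ has as vertices the $k$-cliques of $H$, and two $k$-cliques $A,B$ are adjacent iff $|A\cap B|=k-1$. $\mathcal{K}^{\mathsf{TJ}}(G)=\{k\ge1:\ \exists H,\ \mathsf{TJ}_k(H)\cong G\}$. The Johnson graph $J(n,r)$ has as vertices the $r$-subsets of $\{1,\dots,n\}$, two being adjacent iff their intersection has size $r-1$. *)

From mathcomp Require Import all_boot.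
Set Implicit Arguments. Unset Strict Implicit. Unset Printing Implicit Defensive.

Definition simple_graph (V : finType) (e : rel V) : Prop :=
  symmetric e /\ irreflexive e.

Definition is_kclique (V : finType) (e : rel V) (k : nat) (A : {set V}) : bool :=
  (#|A| == k) && [forall x in A, forall y in A, (x != y) ==> e x y].

Definition TJ_vertex (V : finType) (e : rel V) (k : nat) : finType :=
  {A : {set V} | is_kclique e k A}.

Definition TJ_adj (V : finType) (e : rel V) (k : nat) : rel (TJ_vertex e k) :=
  fun A B => #|val A :&: val B| == k.-1.

Definition J_vertex (n r : nat) : finType := {A : {set 'I_n} | #|A| == r}.

Definition J_adj (n r : nat) : rel (J_vertex n r) :=
  fun A B => #|val A :&: val B| == r.-1.

Definition graph_iso (T1 T2 : finType) (e1 : rel T1) (e2 : rel T2) : Prop :=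
  exists f : T1 -> T2, bijective f /\ forall x y, e1 x y = e2 (f x) (f y).

From mathcomp Require Import all_boot zify.
Set Implicit Arguments. Unset Strict Implicit. Unset Printing Implicit Defensive.

(* A clique of J(n,r),
   i.e. a family of r-sets pairwise meeting in r - 1 points, either has all its
   members containing a common (r-1)-set or all contained in an (r+1)-set, so it
   has at most max(r+1, n-r+1) <= k members.  The k + 1 sets K :\ x of a
   (k+1)-clique K of H would form a larger clique of TJ_k(H), so H has no
   (k+1)-clique.  Then any triangle A, B, C of TJ_k(H) satisfies A :&: B \subset C,
   hence two distinct vertices adjacent to both ends of an edge are adjacent.
   J(n,r) fails this: [0,r) and [0,r-1)+{r} are both adjacent to [0,r-1)+{r+1}
   and to [1,r], which are not adjacent. *)

Lemma card_setI_lt (T : finType) (C D : {set T}) :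
  #|C| = #|D| -> C != D -> #|C :&: D| < #|C|.
Proof.
move=> cCD neCD; apply/proper_card/properIl; apply: contra neCD => CD.
by rewrite eqEcard CD cCD /=.
Qed.

Lemma setI_eq_setD1 (T : finType) (X C : {set T}) x :
  x \in X -> x \notin C -> #|X :&: C| = #|X|.-1 -> X :&: C = X :\ x.
Proof.
move=> xX xC cXC; apply/eqP; rewrite eqEcard; apply/andP; split.
  by apply/subsetP => y; rewrite !inE => /andP [yX yC]; rewrite yX andbT;
     apply: contraNneq xC => <-.
by rewrite cXC (cardsD1 x X) xX.
Qed.

Lemma card_setD1_setI (T : finType) (K : {set T}) x y :
  x \in K -> y \in K -> x != y -> #|(K :\ x) :&: (K :\ y)| = #|K|.-2.
Proof.
move=> xK yK nxy.
have -> : (K :\ x) :&: (K :\ y) = K :\ x :\ y.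
  by apply/setP => z; rewrite !inE; case: (z \in K); rewrite ?andbF ?andbT // andbC.
rewrite (cardsD1 x K) xK (cardsD1 y (K :\ x)) !inE eq_sym nxy yK.
by rewrite !add1n.
Qed.

Section Cliques.

Variables (V : finType) (e : rel V).

Lemma is_kcliqueP k (A : {set V}) :
  reflect (#|A| = k /\ {in A &, forall x y, x != y -> e x y}) (is_kclique e k A).
Proof.
apply: (iffP andP) => [[/eqP cA /forall_inP hA]|[cA hA]]; split=> //.
  by move=> x y xA yA nxy; have /forall_inP/(_ y yA) := hA x xA; rewrite nxy.
by apply/eqP.
by apply/forall_inP => x xA; apply/forall_inP => y yA; apply/implyP; exact: hA.
Qed.

Lemma kclique_setD1 k (K : {set V}) x :
  is_kclique e k.+1 K -> x \in K -> is_kclique e k (K :\ x).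
Proof.
move=> /is_kcliqueP [cK hK] xK; apply/is_kcliqueP; split.
  by apply/eqP; rewrite -eqSS -cK (cardsD1 x K) xK.
by move=> u v /setD1P [_ uK] /setD1P [_ vK]; exact: hK.
Qed.

Variable k : nat.
Hypothesis no_succ_clique : forall K, ~~ is_kclique e k.+1 K.

Lemma kclique_triangle_core (A B C : {set V}) :
  is_kclique e k A -> is_kclique e k B -> is_kclique e k C ->
  #|A :&: B| = k.-1 -> #|A :&: C| = k.-1 -> #|B :&: C| = k.-1 ->
  A :&: B \subset C.
Proof.
move=> /is_kcliqueP [cA eA] /is_kcliqueP [cB eB] /is_kcliqueP [_ eC] cAB cAC cBC.
(* A common vertex x of A and B outside C would make A :|: B a (k+1)-clique:
   A :\ x and B :\ x both lie in the clique C. *)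
apply/subsetP => x /setIP [xA xB]; apply: contraT => xC.
have A_C : A :\ x \subset C.
  by rewrite -(setI_eq_setD1 xA xC) ?subsetIr // cA.
have B_C : B :\ x \subset C.
  by rewrite -(setI_eq_setD1 xB xC) ?subsetIr // cB.
have in_C w : w \in A :|: B -> w != x -> w \in C.
  by case/setUP => wAB wx; [apply: (subsetP A_C) | apply: (subsetP B_C)];
     apply/setD1P.
case/is_kcliqueP: (no_succ_clique (A :|: B)); split.
  have : 0 < #|A| by apply/card_gt0P; exists x.
  by rewrite cardsU cAB cA cB; lia.
move=> u v uAB vAB.
case: (eqVneq u x) => [-> | ux].
  by case/setUP: vAB => vX; [apply: eA | apply: eB].
case: (eqVneq v x) => [-> | vx].
  by case/setUP: uAB => uX; [apply: eA | apply: eB].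
by apply: eC; rewrite ?in_C.
Qed.

Lemma TJ_adj_diamond (a b c d : TJ_vertex e k) :
  TJ_adj a b -> TJ_adj a c -> TJ_adj b c -> TJ_adj a d -> TJ_adj b d ->
  c != d -> TJ_adj c d.
Proof.
move=> /eqP ab /eqP ac /eqP bc /eqP ad /eqP bd ncd.
have /is_kcliqueP [cc _] := valP c; have /is_kcliqueP [cd _] := valP d.
have ab_cd : val a :&: val b \subset val c :&: val d.
  by rewrite subsetI !(kclique_triangle_core (valP a) (valP b) (valP _)).
apply/eqP/anti_leq; rewrite -{2}ab (subset_leq_card ab_cd) andbT.
by have := card_setI_lt (etrans cc (esym cd)) ncd; rewrite cc; lia.
Qed.

End Cliques.

Section Families.

Variable T : finType.

Lemma card_family_le_setC (Q : {set {set T}}) (S : {set T}) :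
  (forall C, C \in Q -> S \subset C /\ #|C| = #|S|.+1) -> #|Q| <= #|~: S|.
Proof.
move=> hQ; have diff_inj : {in Q &, injective (fun C => C :\: S)}.
  move=> C D /hQ [SC _] /hQ [SD _] /= eCD.
  by rewrite -(setID C S) -(setID D S) eCD (setIidPr SC) (setIidPr SD).
rewrite -(card_in_imset diff_inj) -(card_imset (~: S) set1_inj).
apply: subset_leq_card; apply/subsetP => _ /imsetP [C /hQ [SC cC] ->].
have : #|C :\: S| == 1 by rewrite cardsD (setIidPr SC) cC subSnn.
case/cards1P => u CSu; apply/imsetP; exists u => //.
have : u \in C :\: S by rewrite CSu set11.
by case/setDP => _; rewrite inE.
Qed.

Lemma card_family_le_set (Q : {set {set T}}) (U : {set T}) :
  (forall C, C \in Q -> C \subset U /\ #|C|.+1 = #|U|) -> #|Q| <= #|U|.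
Proof.
move=> hQ; rewrite -(card_imset Q (@setC_inj T)) -[U]setCK.
apply: card_family_le_setC => _ /imsetP [C /hQ [CU cC] ->]; split.
  by rewrite setCS.
by have := cardsC C; have := cardsC U; lia.
Qed.

Variables (r : nat) (Q : {set {set T}}).
Hypothesis card_Q : forall C, C \in Q -> #|C| = r.
Hypothesis meet_Q : forall C D, C \in Q -> D \in Q -> C != D -> #|C :&: D| = r.-1.

Section TwoMembers.

Variables P1 P2 : {set T}.
Hypotheses (P1Q : P1 \in Q) (P2Q : P2 \in Q) (neP12 : P1 != P2).

Lemma family_subset_setU C :
  C \in Q -> ~~ (P1 :&: P2 \subset C) -> C \subset P1 :|: P2.
Proof.
move=> CQ nSC.
have nC1 : C != P1 by apply: contra nSC => /eqP ->; exact: subsetIl.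
have nC2 : C != P2 by apply: contra nSC => /eqP ->; exact: subsetIr.
have lt_CS : #|C :&: (P1 :&: P2)| < r.-1.
  by rewrite -(meet_Q P1Q P2Q neP12) proper_card ?properIr.
have : #|C| <= #|C :&: (P1 :|: P2)|.
  rewrite setIUr cardsU setIACA setIid.
  by rewrite (card_Q CQ) (meet_Q CQ P1Q) // (meet_Q CQ P2Q) //; lia.
by move=> le_C; apply/setIidPl/eqP; rewrite eqEcard subsetIl.
Qed.

Lemma family_star_or_union :
  (forall C, C \in Q -> P1 :&: P2 \subset C) \/
  (forall C, C \in Q -> C \subset P1 :|: P2).
Proof.
have [/exists_inP [D DQ nDU] | inU] := boolP [exists D in Q, ~~ (D \subset P1 :|: P2)].
  left => C CQ; apply: contraT => nSC.
  have SD : P1 :&: P2 \subset D.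
    by apply: contraR nDU => nSD; exact: family_subset_setU.
  have CU := family_subset_setU CQ nSC.
  have nCD : C != D by apply: contra nDU => /eqP <-.
  have DU : P1 :&: P2 = D :&: (P1 :|: P2).
    apply/eqP; rewrite eqEcard subsetI SD (subset_trans (subsetIl _ _) (subsetUl _ _)).
    have := proper_card (properIl nDU).
    by rewrite (meet_Q P1Q P2Q neP12) (card_Q DQ); lia.
  have := proper_card (properIr nSC).
  by rewrite {1}DU setIA setIAC (setIidPl CU) meet_Q // (meet_Q P1Q P2Q neP12) ltnn.
right => C CQ; apply: contraT => nCU.
by case/negP: inU; apply/exists_inP; exists C.
Qed.

End TwoMembers.

Lemma family_card_le : 0 < r -> #|Q| <= maxn r.+1 (#|T| - r.-1).
Proof.
move=> r_gt0; case: (leqP #|Q| 1) => [|/card_gt1P [P1 [P2 [P1Q P2Q neP12]]]].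
  by lia.
have cS := meet_Q P1Q P2Q neP12.
have cU : #|P1 :|: P2| = r.+1 by rewrite cardsU cS !card_Q //; lia.
case: (family_star_or_union P1Q P2Q neP12) => [star | inU].
  apply: (leq_trans (@card_family_le_setC Q (P1 :&: P2) _)).
    by move=> C CQ; rewrite star // card_Q // cS; split=> //; lia.
  by have := cardsC (P1 :&: P2); rewrite cS; lia.
apply: (leq_trans (@card_family_le_set Q (P1 :|: P2) _)); last by lia.
by move=> C CQ; rewrite inU // card_Q.
Qed.

End Families.

Lemma card_ord_lt n m : m <= n -> #|[set i : 'I_n | i < m]| = m.
Proof.
move=> le_mn; have -> : [set i : 'I_n | i < m] = [set widen_ord le_mn j | j in 'I_m].
  apply/setP => i; rewrite inE; apply/idP/imsetP => [lt_im | [j _ ->]].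
    by exists (Ordinal lt_im) => //; apply: val_inj.
  exact: (ltn_ord j).
by rewrite card_imset ?card_ord // => i j [] /val_inj.
Qed.

Definition ord_itv n m p : {set 'I_n} := [set i : 'I_n | m <= i < p].

Lemma card_ord_itv n m p : p <= n -> #|ord_itv n m p| = p - m.
Proof.
move=> le_pn.
have -> : ord_itv n m p = [set i : 'I_n | i < p] :\: [set i : 'I_n | i < m].
  by apply/setP => i; rewrite !inE; lia.
rewrite cardsD; have -> : [set i : 'I_n | i < p] :&: [set i : 'I_n | i < m] =
          [set i : 'I_n | i < minn p m].
  by apply/setP => i; rewrite !inE; lia.
by rewrite !card_ord_lt //; lia.
Qed.

Lemma johnson_diamond n r : 1 < r -> r.+2 <= n ->
  exists A B C D : J_vertex n r,
    [/\ J_adj A B, J_adj A C, J_adj B C, J_adj A D & J_adj B D] /\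
    ~~ J_adj C D /\ C != D.
Proof.
move=> lt1r le_rn; pose two m p q s := ord_itv n m p :|: ord_itv n q s.
have card_two m p q s :
    p <= q <= s -> s <= n -> #|two m p q s| = p - m + (s - q).
  move=> le_pqs le_sn; rewrite cardsU.
  have -> : ord_itv n m p :&: ord_itv n q s = set0.
    by apply/setP => i; rewrite !inE; lia.
  by rewrite cards0 !card_ord_itv //; lia.
(* A = [0, r), B = [0, r-1) + r, C = [0, r-1) + (r+1), D = [1, r]. *)
pose A := two 0 r.-1 r.-1 r; pose B := two 0 r.-1 r r.+1.
pose C := two 0 r.-1 r.+1 r.+2; pose D := two 1 r.-1 r.-1 r.+1.
have cA : #|A| == r by rewrite card_two; lia.
have cB : #|B| == r by rewrite card_two; lia.
have cC : #|C| == r by rewrite card_two; lia.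
have cD : #|D| == r by rewrite card_two; lia.
have AB : A :&: B = two 0 r.-1 r.-1 r.-1 by apply/setP => i; rewrite !inE; lia.
have AC : A :&: C = two 0 r.-1 r.-1 r.-1 by apply/setP => i; rewrite !inE; lia.
have BC : B :&: C = two 0 r.-1 r.-1 r.-1 by apply/setP => i; rewrite !inE; lia.
have AD : A :&: D = two 1 r.-1 r.-1 r by apply/setP => i; rewrite !inE; lia.
have BD : B :&: D = two 1 r.-1 r r.+1 by apply/setP => i; rewrite !inE; lia.
have CD : C :&: D = two 1 r.-1 r.+1 r.+1 by apply/setP => i; rewrite !inE; lia.
exists (exist _ A cA), (exist _ B cB), (exist _ C cC), (exist _ D cD).
rewrite /J_adj /= AB AC BC AD BD CD !card_two; try lia.
split; first by split; lia.
split; first by lia.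
apply/eqP => /(congr1 val) /setP /(_ (Ordinal le_rn)); rewrite !inE /=; lia.
Qed.

Lemma no_succ_kclique_of_TJ_embedding (V : finType) (e : rel V) (n r k : nat)
    (f : TJ_vertex e k -> J_vertex n r) :
  0 < r -> r < k -> n - r < k ->
  injective f -> {homo f : A B / TJ_adj A B >-> J_adj A B} ->
  forall K, ~~ is_kclique e k.+1 K.
Proof.
move=> r_gt0 lt_rk lt_nk f_inj f_adj K; apply/negP => cK.
pose del (x : {x | x \in K}) : TJ_vertex e k :=
  exist _ (K :\ val x) (kclique_setD1 cK (valP x)).
have del_inj : injective del.
  move=> x y /(congr1 val) /= eKxy; apply/val_inj/eqP; apply: contraT => nxy.
  have : val x \in K :\ val y by rewrite !inE nxy (valP x).
  by rewrite -eKxy !inE eqxx.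
have /is_kcliqueP [cK1 _] := cK.
pose Q := [set val (f (del x)) | x : {x | x \in K}].
have cQ : #|Q| = k.+1.
  rewrite card_imset; first by rewrite card_sig -cK1.
  by move=> x y /val_inj /f_inj /del_inj.
have card_Q C : C \in Q -> #|C| = r.
  by case/imsetP => x _ ->; apply/eqP; exact: (valP (f (del x))).
have meet_Q C D : C \in Q -> D \in Q -> C != D -> #|C :&: D| = r.-1.
  move=> /imsetP [x _ ->] /imsetP [y _ ->] neq.
  have nxy : val x != val y by apply: contraNneq neq => /val_inj ->.
  apply/eqP/f_adj; rewrite /TJ_adj /= card_setD1_setI ?(valP x) ?(valP y) //.
  by rewrite cK1.
have := family_card_le card_Q meet_Q r_gt0.
by rewrite card_ord cQ; lia.
Qed.

Theorem theorem4p22 (n r k : nat) :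
  4 <= 2 * r -> 2 * r <= n -> n - r < k ->
  forall (V : finType) (e : rel V), simple_graph e ->
    ~ graph_iso (@TJ_adj V e k) (@J_adj n r).
Proof.
move=> le4r le2rn lt_nk V e _ [f [[g fK gK] f_adj]].
have lt1r : 1 < r by lia.
have le_rn : r.+2 <= n by lia.
have no_succ_clique : forall K, ~~ is_kclique e k.+1 K.
  apply: (no_succ_kclique_of_TJ_embedding _ _ _ (can_inj fK)); try lia.
  by move=> a b; rewrite f_adj.
have [A [B [C [D [[AB AC BC AD BD] [nCD neCD]]]]]] := johnson_diamond lt1r le_rn.
have g_adj X Y : J_adj X Y -> TJ_adj (g X) (g Y) by rewrite f_adj !gK.
have := TJ_adj_diamond no_succ_clique (g_adj _ _ AB) (g_adj _ _ AC)
  (g_adj _ _ BC) (g_adj _ _ AD) (g_adj _ _ BD).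
by rewrite (inj_eq (can_inj gK)) f_adj !gK (negbTE nCD) => /(_ neCD).
Qed.
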